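(* Let $\alpha\in(0,1]$ and $\lambda\in\mathbb{C}$. There exists $0\ne\phi\in C^\infty[-1,1]$ solving \[ \Big(\lambda^2+\lambda-\frac{2\alpha\lambda}{1+\sqrt{1-\alpha}\,y}\Big)\phi+\Big(2\lambda+2-\frac{2\alpha}{1+\sqrt{1-\alpha}\,y}\Big)y\,\phi'+(y^2-1)\phi''=0 \] if and only if there exists $0\ne\phi\in C^\infty[-1,1]$ solving \[ (\lambda^2-\lambda)\phi+\big(2\lambda y+2\sqrt{1-\alpha}\big)\phi'+(y^2-1)\phi''=0. \] That is, the eigenvalues of $\mathbf{L}_\alpha$ coincide with the eigenvalues of $\mathbf{L}'_\alpha$.
   Context: $\lambda$ is called an eigenvalue of $\mathbf{L}_\alpha$ (the linearisation of $\partial_{tt}u-\partial_{xx}u=(\partial_tu)^2$ in self-similar variables around the solution $U_{\alpha,\infty,\kappa}(s,y)=\alpha s-\alpha\ln(1+\sqrt{1-\alpha}y)+\kappa$) if the first ODE has a nonzero $C^\infty[-1,1]$ solution, and an eigenvalue of $\mathbf{L}'_\alpha$ if the second ODE has a nonzero $C^\infty[-1,1]$ solution. *)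

From Stdlib Require Import Reals.
From Coquelicot Require Import Coquelicot.
Open Scope R_scope.

Definition I11 (y : R) : Prop := -1 <= y <= 1.

Definition has_deriv_within_I (f g : R -> C) (y : R) : Prop :=
  forall eps : R, 0 < eps -> exists delta : R, 0 < delta /\
    forall h : R, h <> 0 -> Rabs h < delta -> I11 (y + h) ->
      Cmod (Cminus (Cdiv (Cminus (f (y + h)) (f y)) (RtoC h)) (g y)) < eps.

(* D is a tower of derivatives of D 0 on [-1,1]: D (S n) is the derivative
   of D n on [-1,1].  A function phi is in C^oo[-1,1] iff it is D 0 for such a tower. *)
Definition deriv_tower (D : nat -> R -> C) : Prop :=
  forall (n : nat) (y : R), I11 y -> has_deriv_within_I (D n) (D (S n)) y.

Definition smooth_I (phi : R -> C) : Prop :=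
  exists D : nat -> R -> C, deriv_tower D /\ forall y, I11 y -> D O y = phi y.

Definition nonzero_I (phi : R -> C) : Prop := exists y, I11 y /\ phi y <> RtoC 0.

Definition ode1 (alpha : R) (lam : C) (phi phi1 phi2 : R -> C) : Prop :=
  forall y : R, I11 y ->
    let q := RtoC (1 + sqrt (1 - alpha) * y) in
    (Cplus (Cplus
      (Cmult (Cminus (Cplus (Cmult lam lam) lam)
                     (Cdiv (Cmult (RtoC (2 * alpha)) lam) q)) (phi y))
      (Cmult (Cmult (Cminus (Cplus (Cmult (RtoC 2) lam) (RtoC 2))
                            (Cdiv (RtoC (2 * alpha)) q)) (RtoC y)) (phi1 y)))
      (Cmult (RtoC (y ^ 2 - 1)) (phi2 y))) = RtoC 0.

Definition ode2 (alpha : R) (lam : C) (phi phi1 phi2 : R -> C) : Prop :=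
  forall y : R, I11 y ->
    (Cplus (Cplus
      (Cmult (Cminus (Cmult lam lam) lam) (phi y))
      (Cmult (Cplus (Cmult (RtoC 2) (Cmult lam (RtoC y))) (RtoC (2 * sqrt (1 - alpha))))
             (phi1 y)))
      (Cmult (RtoC (y ^ 2 - 1)) (phi2 y))) = RtoC 0.

Definition eigen_L (alpha : R) (lam : C) : Prop :=
  exists D : nat -> R -> C, deriv_tower D /\ nonzero_I (D O) /\
    ode1 alpha lam (D O) (D 1%nat) (D 2%nat).

Definition eigen_L' (alpha : R) (lam : C) : Prop :=
  exists D : nat -> R -> C, deriv_tower D /\ nonzero_I (D O) /\
    ode2 alpha lam (D O) (D 1%nat) (D 2%nat).

(* With a = sqrt (1 - alpha), the Moebius map m(y) = (y - a) / (1 - a y) maps [-1,1]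
   onto itself, and the substitution phi(y) = (1 - a y)^(-lam) psi(m(y)) conjugates the
   two operators: the second equation for phi at y is alpha (1 - a y)^(-lam-2) times the
   first equation for psi at m(y).  The substitution with -a in place of a transforms the
   other way, with the same kind of nonvanishing factor.  Both substitutions preserve
   smoothness on [-1,1], because every derivative of (1 - b y)^c f(m(y)) is a finite
   combination of functions (1 - b y)^e f^(j)(m(y)), and they preserve nontriviality,
   because m is a bijection of [-1,1] and (1 - b y)^c never vanishes. *)

From Stdlib Require Import Reals Lra.
From Coquelicot Require Import Coquelicot.
Open Scope R_scope.

Definition little_o_I (y : R) (F : R -> C) : Prop :=
  forall eps, 0 < eps -> exists d, 0 < d /\
    forall h, Rabs h < d -> I11 (y + h) -> Cmod (F h) <= eps * Rabs h.

Definition vanishing_I (y : R) (F : R -> C) : Prop :=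
  forall eps, 0 < eps -> exists d, 0 < d /\
    forall h, Rabs h < d -> I11 (y + h) -> Cmod (F h) <= eps.

Definition bounded_near_I (y : R) (F : R -> C) : Prop :=
  exists K d, 0 < d /\ forall h, Rabs h < d -> I11 (y + h) -> Cmod (F h) <= K.

Definition is_derive_I (f : R -> C) (y : R) (l : C) : Prop :=
  little_o_I y (fun h => f (y + h)%R - f y - RtoC h * l)%C.

Lemma little_o_I_ext y F G : (forall h, F h = G h) -> little_o_I y F -> little_o_I y G.
Proof.
  intros E HF eps Heps. destruct (HF eps Heps) as [d [Hd Hh]].
  exists d; split; [exact Hd |]. intros h Hhd Hi. rewrite <- E. auto.
Qed.

Lemma little_o_I_plus y F G :
  little_o_I y F -> little_o_I y G -> little_o_I y (fun h => F h + G h)%C.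
Proof.
  intros HF HG eps Heps.
  destruct (HF (eps / 2)) as [d1 [Hd1 H1]]; [lra |].
  destruct (HG (eps / 2)) as [d2 [Hd2 H2]]; [lra |].
  exists (Rmin d1 d2); split; [apply Rmin_pos; assumption |].
  intros h Hh Hi. apply Rmin_Rgt_l in Hh as [Hh1 Hh2].
  specialize (H1 h Hh1 Hi). specialize (H2 h Hh2 Hi).
  eapply Rle_trans; [apply Cmod_triangle |].
  lra.
Qed.

Lemma little_o_I_bounded_mult y X F :
  bounded_near_I y X -> little_o_I y F -> little_o_I y (fun h => X h * F h)%C.
Proof.
  intros [K [d0 [Hd0 HX]]] HF eps Heps.
  set (K' := Rabs K + 1).
  assert (HK' : 0 < K') by (unfold K'; pose proof (Rabs_pos K); lra).
  destruct (HF (eps / K')) as [d1 [Hd1 H1]]; [apply Rdiv_lt_0_compat; lra |].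
  exists (Rmin d0 d1); split; [apply Rmin_pos; assumption |].
  intros h Hh Hi. apply Rmin_Rgt_l in Hh as [Hh0 Hh1]. rewrite Cmod_mult.
  specialize (HX h Hh0 Hi). specialize (H1 h Hh1 Hi).
  assert (Cmod (X h) <= K') by (unfold K'; pose proof (Rle_abs K); lra).
  apply Rle_trans with (K' * (eps / K' * Rabs h)).
  - apply Rmult_le_compat; auto using Cmod_ge_0.
  - right. field. lra.
Qed.

Lemma little_o_I_scal y k F : little_o_I y F -> little_o_I y (fun h => k * F h)%C.
Proof.
  apply (little_o_I_bounded_mult y (fun _ => k)).
  exists (Cmod k), 1. split; [lra |]. intros; lra.
Qed.

Lemma little_o_I_mult_vanishing y F :
  vanishing_I y F -> little_o_I y (fun h => RtoC h * F h)%C.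
Proof.
  intros HF eps Heps. destruct (HF eps Heps) as [d [Hd H]].
  exists d; split; [exact Hd |]. intros h Hh Hi.
  rewrite Cmod_mult, Cmod_R, Rmult_comm.
  apply Rmult_le_compat_r; [apply Rabs_pos | auto].
Qed.

Lemma vanishing_I_bounded y F : vanishing_I y F -> bounded_near_I y F.
Proof. intros HF. destruct (HF 1) as [d [Hd H]]; [lra |]. exists 1, d. auto. Qed.

Lemma little_o_I_comp y x F (k : R -> R) K d0 :
  0 < d0 -> (forall h, Rabs h < d0 -> I11 (y + h) -> Rabs (k h) <= K * Rabs h) ->
  (forall h, I11 (y + h) -> I11 (x + k h)) ->
  little_o_I x F -> little_o_I y (fun h => F (k h)).
Proof.
  intros Hd0 Hk HI HF eps Heps.
  set (K' := Rabs K + 1).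
  assert (HK' : 0 < K') by (unfold K'; pose proof (Rabs_pos K); lra).
  destruct (HF (eps / K')) as [d1 [Hd1 H1]]; [apply Rdiv_lt_0_compat; lra |].
  exists (Rmin d0 (d1 / K')); split; [apply Rmin_pos; [| apply Rdiv_lt_0_compat]; lra |].
  intros h Hh Hi. apply Rmin_Rgt_l in Hh as [Hh0 Hh1].
  assert (Hkh : Rabs (k h) <= K' * Rabs h).
  { eapply Rle_trans; [apply Hk; assumption |].
    apply Rmult_le_compat_r; [apply Rabs_pos | unfold K'; pose proof (Rle_abs K); lra]. }
  assert (Hkd : Rabs (k h) < d1).
  { apply Rmult_lt_compat_l with (r := K') in Hh1; [| exact HK'].
    replace (K' * (d1 / K')) with d1 in Hh1 by (field; lra). lra. }
  eapply Rle_trans; [apply H1; auto |].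
  apply Rle_trans with (eps / K' * (K' * Rabs h)).
  - apply Rmult_le_compat_l; [apply Rlt_le, Rdiv_lt_0_compat; lra | exact Hkh].
  - right. field. lra.
Qed.

Lemma derivable_pt_lim_little_o_I mu y d :
  derivable_pt_lim mu y d -> little_o_I y (fun h => RtoC (mu (y + h) - mu y - h * d)).
Proof.
  intros Hmu eps Heps. destruct (Hmu eps Heps) as [[d0 Hd0] H].
  exists d0; split; [exact Hd0 |]. intros h Hh _. rewrite Cmod_R.
  destruct (Req_dec h 0) as [-> | Hn].
  - rewrite Rplus_0_r. replace (mu y - mu y - 0 * d) with 0 by ring.
    rewrite Rabs_R0. lra.
  - specialize (H h Hn Hh).
    replace (mu (y + h) - mu y - h * d) with (h * ((mu (y + h) - mu y) / h - d)) by (field; auto).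
    rewrite Rabs_mult, Rmult_comm. apply Rmult_le_compat_r; [apply Rabs_pos | lra].
Qed.

Lemma RtoC_neq0 x : x <> 0 -> RtoC x <> RtoC 0.
Proof. intros H E. apply H. injection E. auto. Qed.

Lemma has_deriv_within_I_iff f g y : has_deriv_within_I f g y <-> is_derive_I f y (g y).
Proof.
  split.
  - intros H eps Heps. destruct (H eps Heps) as [d [Hd Hh]].
    exists d; split; [exact Hd |]. intros h Hr Hi.
    destruct (Req_dec h 0) as [-> | Hn].
    + rewrite Rplus_0_r. replace (f y - f y - RtoC 0 * g y)%C with (RtoC 0) by ring.
      rewrite Cmod_0, Rabs_R0. lra.
    + specialize (Hh h Hn Hr Hi).
      replace (f (y + h)%R - f y - RtoC h * g y)%C
        with (RtoC h * ((f (y + h)%R - f y) / RtoC h - g y))%C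
        by (field; apply RtoC_neq0; exact Hn).
      rewrite Cmod_mult, Cmod_R, Rmult_comm.
      apply Rmult_le_compat_r; [apply Rabs_pos | lra].
  - intros H eps Heps. destruct (H (eps / 2)) as [d [Hd Hh]]; [lra |].
    exists d; split; [exact Hd |]. intros h Hn Hr Hi. specialize (Hh h Hr Hi).
    assert (HC := RtoC_neq0 h Hn).
    replace ((f (y + h)%R - f y) / RtoC h - g y)%C
      with ((f (y + h)%R - f y - RtoC h * g y) / RtoC h)%C by (field; exact HC).
    rewrite Cmod_div, Cmod_R by exact HC.
    assert (Hh0 : 0 < Rabs h) by (apply Rabs_pos_lt; exact Hn).
    apply Rmult_lt_reg_r with (Rabs h); [exact Hh0 |].
    unfold Rdiv. rewrite Rmult_assoc, Rinv_l by lra. nra.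
Qed.

Lemma is_derive_I_vanishing f y l :
  is_derive_I f y l -> vanishing_I y (fun h => f (y + h)%R - f y)%C.
Proof.
  intros Hf eps Heps. destruct (Hf 1) as [d [Hd H]]; [lra |].
  set (K := Cmod l + 1).
  assert (HK : 0 < K) by (unfold K; pose proof (Cmod_ge_0 l); lra).
  exists (Rmin d (eps / K)); split; [apply Rmin_pos; [| apply Rdiv_lt_0_compat]; lra |].
  intros h Hh Hi. apply Rmin_Rgt_l in Hh as [Hhd Hh]. specialize (H h Hhd Hi).
  replace (f (y + h)%R - f y)%C with ((f (y + h)%R - f y - RtoC h * l) + RtoC h * l)%C by ring.
  eapply Rle_trans; [apply Cmod_triangle |]. rewrite Cmod_mult, Cmod_R.
  apply Rle_trans with (Rabs h * K); [unfold K; lra |].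
  apply Rmult_lt_compat_r with (r := K) in Hh; [| exact HK].
  replace (eps / K * K) with eps in Hh by (field; lra). lra.
Qed.

Lemma is_derive_I_const k y : is_derive_I (fun _ => k) y (RtoC 0).
Proof.
  intros eps Heps. exists 1. split; [lra |]. intros h _ _.
  replace (k - k - RtoC h * RtoC 0)%C with (RtoC 0) by ring.
  rewrite Cmod_0. pose proof (Rabs_pos h). nra.
Qed.

Lemma is_derive_I_plus f g y lf lg :
  is_derive_I f y lf -> is_derive_I g y lg ->
  is_derive_I (fun x => f x + g x)%C y (lf + lg)%C.
Proof.
  intros Hf Hg. eapply little_o_I_ext; [| exact (little_o_I_plus _ _ _ Hf Hg)].
  intros h. simpl. ring.
Qed.

Lemma is_derive_I_scal f y k l :
  is_derive_I f y l -> is_derive_I (fun x => k * f x)%C y (k * l)%C.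
Proof.
  intros Hf. eapply little_o_I_ext; [| exact (little_o_I_scal _ k _ Hf)].
  intros h. simpl. ring.
Qed.

Lemma is_derive_I_mult f g y lf lg :
  is_derive_I f y lf -> is_derive_I g y lg ->
  is_derive_I (fun x => f x * g x)%C y (lf * g y + f y * lg)%C.
Proof.
  intros Hf Hg.
  assert (Vf := is_derive_I_vanishing f y lf Hf).
  eapply little_o_I_ext;
    [| exact (little_o_I_plus _ _ _
          (little_o_I_plus _ _ _
             (little_o_I_bounded_mult _ _ _ (vanishing_I_bounded _ _ Vf) Hg)
             (little_o_I_plus _ _ _ (little_o_I_scal _ (f y) _ Hg) (little_o_I_scal _ (g y) _ Hf)))
          (little_o_I_scal _ lg _ (little_o_I_mult_vanishing _ _ Vf)))].
  intros h. simpl. ring.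
Qed.

Lemma is_derive_I_comp f mu y lf d :
  derivable_pt_lim mu y d -> (forall x, I11 x -> I11 (mu x)) ->
  is_derive_I f (mu y) lf -> is_derive_I (fun x => f (mu x)) y (lf * RtoC d)%C.
Proof.
  intros Hmu HI Hf.
  assert (Omu := derivable_pt_lim_little_o_I mu y d Hmu).
  destruct (Omu 1) as [d0 [Hd0 Hlip]]; [lra |].
  assert (Hk : forall h, Rabs h < d0 -> I11 (y + h) ->
                 Rabs (mu (y + h) - mu y) <= (Rabs d + 1) * Rabs h).
  { intros h Hh Hi. specialize (Hlip h Hh Hi). rewrite Cmod_R in Hlip.
    replace (mu (y + h) - mu y) with ((mu (y + h) - mu y - h * d) + h * d) by ring.
    eapply Rle_trans; [apply Rabs_triang |]. rewrite Rabs_mult. nra. }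
  assert (HIk : forall h, I11 (y + h) -> I11 (mu y + (mu (y + h) - mu y))).
  { intros h Hi. rewrite Rplus_minus. auto. }
  eapply little_o_I_ext;
    [| exact (little_o_I_plus _ _ _
                (little_o_I_comp _ _ _ _ _ _ Hd0 Hk HIk Hf) (little_o_I_scal _ lf _ Omu))].
  intros h. cbv beta. rewrite Rplus_minus, !RtoC_minus, !RtoC_mult. ring.
Qed.

Lemma is_derive_I_re_im f y l :
  derivable_pt_lim (fun x => Re (f x)) y (Re l) ->
  derivable_pt_lim (fun x => Im (f x)) y (Im l) -> is_derive_I f y l.
Proof.
  intros Hre Him.
  eapply little_o_I_ext;
    [| exact (little_o_I_plus _ _ _ (derivable_pt_lim_little_o_I _ _ _ Hre)
                (little_o_I_scal _ Ci _ (derivable_pt_lim_little_o_I _ _ _ Him)))].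
  intros h. cbv beta. destruct (f (y + h)%R), (f y), l.
  apply injective_projections; simpl; ring.
Qed.

Definition cpow (x : R) (c : C) : C :=
  (exp (Re c * ln x) * cos (Im c * ln x), exp (Re c * ln x) * sin (Im c * ln x)).

Lemma cpow_neq0 x c : cpow x c <> RtoC 0.
Proof.
  unfold cpow, RtoC. intros E. injection E as E1 E2.
  pose proof (exp_pos (Re c * ln x)). pose proof (sin2_cos2 (Im c * ln x)). unfold Rsqr in *.
  apply Rmult_integral in E1 as [E1 | E1]; [lra |].
  apply Rmult_integral in E2 as [E2 | E2]; [lra |].
  rewrite E1, E2 in *. lra.
Qed.

Lemma cpow_sub1 x c : 0 < x -> cpow x (c - 1) = (cpow x c * RtoC (/ x))%C.
Proof.
  intros Hx. destruct c as [cr ci]. unfold cpow, Re, Im. simpl.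
  replace ((cr + Ropp 1) * ln x) with (cr * ln x + - ln x) by ring.
  replace ((ci + - 0) * ln x) with (ci * ln x) by ring.
  rewrite exp_plus, exp_Ropp, exp_ln by exact Hx.
  apply injective_projections; simpl; ring.
Qed.

Lemma is_derive_I_cpow b c y : 0 < 1 - b * y ->
  is_derive_I (fun x => cpow (1 - b * x) c) y (RtoC (- b) * c * cpow (1 - b * y) (c - 1))%C.
Proof.
  intros Hm. rewrite cpow_sub1 by exact Hm. destruct c as [cr ci].
  apply is_derive_I_re_im; apply is_derive_Reals; unfold cpow, Re, Im; simpl;
    (auto_derive; [lra |]); replace (1 + - (b * y)) with (1 - b * y) by ring; field; lra.
Qed.

Definition mobius (b y : R) : R := (y - b) / (1 - b * y).

Lemma mobius_denom_pos b y : -1 < b < 1 -> I11 y -> 0 < 1 - b * y.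
Proof.
  intros Hb [Hy1 Hy2].
  destruct (Rle_dec 0 b); [assert (b * y <= b) by nra | assert (b * y <= - b) by nra]; lra.
Qed.

Lemma mobius_I11 b y : -1 < b < 1 -> I11 y -> I11 (mobius b y).
Proof.
  intros Hb Hy. pose proof (mobius_denom_pos b y Hb Hy) as Hm. destruct Hy as [Hy1 Hy2].
  unfold mobius, I11.
  split; apply Rmult_le_reg_r with (1 - b * y); try exact Hm;
    unfold Rdiv; rewrite Rmult_assoc, Rinv_l by lra; nra.
Qed.

Lemma mobiusK b z : -1 < b < 1 -> I11 z -> mobius b (mobius (- b) z) = z.
Proof.
  intros Hb Hz. pose proof (mobius_denom_pos (- b) z ltac:(lra) Hz). unfold mobius.
  assert (1 - b * b <> 0) by nra.
  field. lra.
Qed.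

Lemma derivable_pt_lim_mobius b y : 0 < 1 - b * y ->
  derivable_pt_lim (mobius b) y ((1 - b * b) * / (1 - b * y) * / (1 - b * y)).
Proof. intros Hm. apply is_derive_Reals. unfold mobius. auto_derive; [lra |]. field. lra. Qed.

Open Scope list_scope.

(* [Term k e j] stands for [y |-> k (1 - b y)^e D_j (mobius b y)]. *)
Record term := Term { coef : C; expo : C; order : nat }.

Definition term_val (b : R) (D : nat -> R -> C) (t : term) (y : R) : C :=
  (coef t * cpow (1 - b * y) (expo t) * D (order t) (mobius b y))%C.

Fixpoint comb_val (b : R) (D : nat -> R -> C) (L : list term) (y : R) : C :=
  match L with
  | nil => RtoC 0
  | t :: L => (term_val b D t y + comb_val b D L y)%C
  end.

Fixpoint comb_deriv (b : R) (L : list term) : list term :=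
  match L with
  | nil => nil
  | Term k e j :: L =>
      Term (k * RtoC (- b) * e) (e - 1) j
      :: Term (k * RtoC (1 - b * b)) (e - 1 - 1) (S j)
      :: comb_deriv b L
  end%C.

Definition mobius_tower (b : R) (c : C) (D : nat -> R -> C) (n : nat) : R -> C :=
  comb_val b D (Nat.iter n (comb_deriv b) (Term (RtoC 1) c 0 :: nil)).

Section MobiusTower.

Variables (b : R) (D : nat -> R -> C).
Hypotheses (Hb : -1 < b < 1) (HD : deriv_tower D).

Lemma is_derive_I_term_val t y : I11 y ->
  is_derive_I (term_val b D t) y (comb_val b D (comb_deriv b (t :: nil)) y).
Proof.
  intros Hy. pose proof (mobius_denom_pos b y Hb Hy) as Hm. destruct t as [k e j].
  assert (Hpow := is_derive_I_scal _ y k _ (is_derive_I_cpow b e y Hm)).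
  assert (Hcomp : is_derive_I (fun x => D j (mobius b x)) y
                    (D (S j) (mobius b y) * RtoC ((1 - b * b) * / (1 - b * y) * / (1 - b * y)))%C).
  { apply is_derive_I_comp.
    - apply derivable_pt_lim_mobius, Hm.
    - intros x Hx. apply mobius_I11; assumption.
    - apply has_deriv_within_I_iff, HD, mobius_I11; assumption. }
  eapply little_o_I_ext; [| exact (is_derive_I_mult _ _ _ _ _ Hpow Hcomp)].
  intros h. simpl. unfold term_val; simpl. rewrite !cpow_sub1, !RtoC_mult by exact Hm. ring.
Qed.

Lemma is_derive_I_comb_val L y : I11 y ->
  is_derive_I (comb_val b D L) y (comb_val b D (comb_deriv b L) y).
Proof.
  intros Hy. induction L as [| [k e j] L IH]; simpl.
  - apply is_derive_I_const.
  - assert (Ht := is_derive_I_term_val (Term k e j) y Hy).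
    eapply little_o_I_ext; [| exact (is_derive_I_plus _ _ _ _ _ Ht IH)].
    intros h. simpl. ring.
Qed.

Lemma mobius_tower_deriv_tower c : deriv_tower (mobius_tower b c D).
Proof.
  intros n y Hy. apply has_deriv_within_I_iff.
  unfold mobius_tower. simpl. apply is_derive_I_comb_val, Hy.
Qed.

End MobiusTower.

(* [ode1 alpha lam f f1 f2] unfolds to
   [forall y, I11 y -> ode1_at alpha lam y (f y) (f1 y) (f2 y) = 0], and likewise for [ode2]. *)
Definition ode1_at (alpha : R) (lam : C) (y : R) (v0 v1 v2 : C) : C :=
  let q := RtoC (1 + sqrt (1 - alpha) * y) in
  (Cplus (Cplus
    (Cmult (Cminus (Cplus (Cmult lam lam) lam)
                   (Cdiv (Cmult (RtoC (2 * alpha)) lam) q)) v0)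
    (Cmult (Cmult (Cminus (Cplus (Cmult (RtoC 2) lam) (RtoC 2))
                          (Cdiv (RtoC (2 * alpha)) q)) (RtoC y)) v1))
    (Cmult (RtoC (y ^ 2 - 1)) v2)).

Definition ode2_at (alpha : R) (lam : C) (y : R) (v0 v1 v2 : C) : C :=
  (Cplus (Cplus
    (Cmult (Cminus (Cmult lam lam) lam) v0)
    (Cmult (Cplus (Cmult (RtoC 2) (Cmult lam (RtoC y))) (RtoC (2 * sqrt (1 - alpha)))) v1))
    (Cmult (RtoC (y ^ 2 - 1)) v2)).

Ltac push_RtoC :=
  repeat first [rewrite RtoC_div by assumption | rewrite RtoC_inv by assumption
               | rewrite RtoC_minus | rewrite RtoC_mult | rewrite RtoC_opp | rewrite RtoC_plus].

Lemma ode2_at_mobius_tower alpha lam D y : 0 < alpha <= 1 -> I11 y ->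
  let a := sqrt (1 - alpha) in
  ode2_at alpha lam y (mobius_tower a (- lam) D 0 y) (mobius_tower a (- lam) D 1 y)
    (mobius_tower a (- lam) D 2 y)
  = (RtoC alpha * cpow (1 - a * y) (- lam) * RtoC (/ (1 - a * y)) * RtoC (/ (1 - a * y))
     * ode1_at alpha lam (mobius a y) (D 0%nat (mobius a y)) (D 1%nat (mobius a y))
         (D 2%nat (mobius a y)))%C.
Proof.
  intros Halpha Hy a.
  assert (Ha0 : 0 <= a) by apply sqrt_pos.
  assert (Haa : a * a = 1 - alpha) by (apply sqrt_sqrt; lra).
  pose proof (mobius_denom_pos a y ltac:(nra) Hy) as Hm.
  unfold ode1_at, ode2_at, mobius_tower; simpl. unfold term_val, mobius; simpl. fold a.
  clearbody a. replace alpha with (1 - a * a) by lra.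
  rewrite !cpow_sub1 by exact Hm.
  assert (Hq : 1 + a * ((y - a) / (1 - a * y)) = (1 - a * a) / (1 - a * y)) by (field; lra).
  rewrite Hq.
  assert (Hm0 : 1 - a * y <> 0) by lra.
  assert (Hal0 : 1 - a * a <> 0) by lra.
  push_RtoC.
  field.
  split; intro E; apply (f_equal fst) in E; simpl in E; lra.
Qed.

Lemma ode1_at_mobius_tower alpha lam D y : 0 < alpha <= 1 -> I11 y ->
  let a := sqrt (1 - alpha) in
  ode1_at alpha lam y (mobius_tower (- a) (- lam) D 0 y) (mobius_tower (- a) (- lam) D 1 y)
    (mobius_tower (- a) (- lam) D 2 y)
  = (RtoC alpha * cpow (1 - - a * y) (- lam) * RtoC (/ (1 - - a * y)) * RtoC (/ (1 - - a * y))
     * ode2_at alpha lam (mobius (- a) y) (D 0%nat (mobius (- a) y)) (D 1%nat (mobius (- a) y))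
         (D 2%nat (mobius (- a) y)))%C.
Proof.
  intros Halpha Hy a.
  assert (Ha0 : 0 <= a) by apply sqrt_pos.
  assert (Haa : a * a = 1 - alpha) by (apply sqrt_sqrt; lra).
  pose proof (mobius_denom_pos (- a) y ltac:(nra) Hy) as Hm.
  unfold ode1_at, ode2_at, mobius_tower; simpl. unfold term_val, mobius; simpl. fold a.
  clearbody a. replace alpha with (1 - a * a) by lra.
  rewrite !cpow_sub1 by exact Hm.
  assert (Hm0 : 1 - - a * y <> 0) by lra.
  assert (Hq : 1 + a * y <> 0) by lra.
  assert (Hal0 : 1 - a * a <> 0) by lra.
  push_RtoC.
  field.
  intro E; apply (f_equal fst) in E; simpl in E; lra.
Qed.

Lemma eigen_transfer (P Q : R -> C -> C -> C -> C) b c : -1 < b < 1 ->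
  (forall D y, I11 y -> exists k,
     Q y (mobius_tower b c D 0 y) (mobius_tower b c D 1 y) (mobius_tower b c D 2 y)
     = (k * P (mobius b y) (D 0%nat (mobius b y)) (D 1%nat (mobius b y))
              (D 2%nat (mobius b y)))%C) ->
  (exists D, deriv_tower D /\ nonzero_I (D 0%nat) /\
     forall y, I11 y -> P y (D 0%nat y) (D 1%nat y) (D 2%nat y) = RtoC 0) ->
  exists E, deriv_tower E /\ nonzero_I (E 0%nat) /\
     forall y, I11 y -> Q y (E 0%nat y) (E 1%nat y) (E 2%nat y) = RtoC 0.
Proof.
  intros Hb HPQ [D [HD [[z [Hz Hnz]] HP]]].
  exists (mobius_tower b c D). split; [| split].
  - apply mobius_tower_deriv_tower; assumption.
  - exists (mobius (- b) z). split; [apply mobius_I11; [lra | exact Hz] |].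
    unfold mobius_tower; simpl. unfold term_val; simpl. rewrite mobiusK by assumption.
    replace (RtoC 1 * cpow (1 - b * mobius (- b) z) c * D 0%nat z + RtoC 0)%C
      with (cpow (1 - b * mobius (- b) z) c * D 0%nat z)%C by ring.
    apply Cmult_neq_0; [apply cpow_neq0 | exact Hnz].
  - intros y Hy. destruct (HPQ D y Hy) as [k ->].
    rewrite HP by (apply mobius_I11; assumption). ring.
Qed.

Theorem corollary3p1 (alpha : R) (lam : C) :
  0 < alpha <= 1 -> (eigen_L alpha lam <-> eigen_L' alpha lam).
Proof.
  intros Halpha.
  assert (Ha : -1 < sqrt (1 - alpha) < 1).
  { pose proof (sqrt_pos (1 - alpha)). pose proof (sqrt_sqrt (1 - alpha) ltac:(lra)). nra. }
  split.
  - apply (eigen_transfer (ode1_at alpha lam) (ode2_at alpha lam) (sqrt (1 - alpha)) (- lam) Ha).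
    intros D y Hy. eexists. apply ode2_at_mobius_tower; assumption.
  - apply (eigen_transfer (ode2_at alpha lam) (ode1_at alpha lam) (- sqrt (1 - alpha)) (- lam));
      [lra |].
    intros D y Hy. eexists. apply ode1_at_mobius_tower; assumption.
Qed.
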